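(* Write \[ \frac{2q J_{10}^6}{J_{2,10}^2 J_{3,10}^2} = \sum_{n\ge 1} b'(n) q^n . \] Then $b'(n) \ge 2\lfloor (n-1)/6 \rfloor$ for all $n \ge 1$.
   Context: Notation: $(a;q)_\infty = \prod_{i\ge 0}(1-aq^i)$ and $(a_1,\dots,a_k;q)_\infty = (a_1;q)_\infty\cdots(a_k;q)_\infty$. For positive integers $a<b$: $J_b = (q^b;q^b)_\infty$ and $J_{a,b} = (q^a, q^{b-a}, q^b; q^b)_\infty$. *)

(* q-series with integer coefficients, handled through
   exact polynomial truncations. *)
From HB Require Import structures.
From mathcomp Require Import all_boot all_order all_algebra.
Set Implicit Arguments. Unset Strict Implicit. Unset Printing Implicit Defensive.
Import Order.TTheory GRing.Theory Num.Theory.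
Local Open Scope ring_scope.

(* Finite truncation of (q^a; q^b)_oo : prod_{i < N} (1 - q^(a + b i)).
   For a, b >= 1 it agrees with (q^a;q^b)_oo modulo q^N. *)
Definition poch_tr (N a b : nat) : {poly int} :=
  \prod_(i < N) (1 - 'X^(a + b * i)).

(* Finite truncation of 1/(q^a; q^b)_oo, expanding each factor
   1/(1 - q^e) = sum_{j>=0} q^(e j); agrees with 1/(q^a;q^b)_oo
   modulo q^N when a, b >= 1. *)
Definition poch_inv_tr (N a b : nat) : {poly int} :=
  \prod_(i < N) \sum_(j < N) 'X^((a + b * i) * j).

Definition J_tr (N b : nat) : {poly int} := poch_tr N b b.

Definition Jab_inv_tr (N a b : nat) : {poly int} :=
  poch_inv_tr N a b * poch_inv_tr N (b - a) b * poch_inv_tr N b b.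

(* b'(n) := coefficient of q^n in 2 q J_10^6 / (J_{2,10}^2 J_{3,10}^2).
   Using n+1 factors / terms is exact for the coefficient of q^n. *)
Definition bprime (n : nat) : int :=
  (2%:P * 'X * J_tr n.+1 10 ^+ 6
     * Jab_inv_tr n.+1 2 10 ^+ 2 * Jab_inv_tr n.+1 3 10 ^+ 2)`_n.

From HB Require Import structures.
From mathcomp Require Import all_boot all_order all_algebra.
From mathcomp Require Import ring zify.
Import Order.TTheory GRing.Theory Num.Theory.
Local Open Scope ring_scope.

(* Since (q^2,q^7;q^10)_oo = (q^2;q^5)_oo and (q^3,q^8;q^10)_oo = (q^3;q^5)_oo,
   the series is 2q J_10^2 / ((q^2;q^5)_oo (q^3;q^5)_oo)^2.  Pairing the factors
   (1 - q^(10+10j)) of J_10 with (1 - q^(2+5j)) (1 - q^(8+5j)) and with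
   (1 - q^(3+5j)) (1 - q^(7+5j)), and using that
   (1 - q^(a+b)) / ((1 - q^a)(1 - q^b)) = 1/(1 - q^b) + q^a/(1 - q^a)
   has nonnegative coefficients, the series is 2q / ((1-q^2)(1-q^3)) times a
   series with constant term 1 and nonnegative coefficients.  The coefficient of
   q^m in 1/((1-q^2)(1-q^3)) counts the j with 3j <= m and m - 3j even, and
   among j = 2k, 2k+1 with k < m/6 exactly one qualifies. *)

Section BigDouble.

Variables (R : Type) (idx : R) (op : Monoid.com_law idx).

Lemma big_ord_double K (F : nat -> R) :
  op (\big[op/idx]_(i < K) F i.*2) (\big[op/idx]_(i < K) F i.*2.+1)
  = \big[op/idx]_(j < K.*2) F j.
Proof.
elim: K => [|K IH]; first by rewrite !big_ord0 Monoid.mulm1.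
by rewrite doubleS !big_ord_recr /= -IH Monoid.mulmACA Monoid.mulmA.
Qed.

Lemma big_ord_cat K M (F : nat -> R) : (K <= M)%N ->
  \big[op/idx]_(j < M) F j
  = op (\big[op/idx]_(j < K) F j) (\big[op/idx]_(K <= j < M) F j).
Proof.
by move=> leKM; rewrite -!(big_mkord (fun _ => true) F) (big_cat_nat _ (n := K)).
Qed.

End BigDouble.

Lemma mul1B_sumX (R : nzRingType) (x : R) n :
  (1 - x) * \sum_(i < n) x ^+ i = 1 - x ^+ n.
Proof. by rewrite -opprB mulNr -subrX1 opprB. Qed.

(* Truncations are multiplied as exact polynomials: every discrepancy with the
   infinite products is a multiple of some q^k with k >= N, invisible below q^N. *)
Section TruncatedSeries.

Variable N : nat.

Definition nncoef (F : {poly int}) := forall i, (i < N)%N -> 0 <= F`_i.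

Definition nncoef1 (F : {poly int}) := F`_0 = 1 /\ nncoef F.

Definition vanish_below (F : {poly int}) := forall i, (i < N)%N -> F`_i = 0.

Definition geom_tr (e : nat) : {poly int} := \sum_(j < N) 'X^(e * j).

Lemma geom_tr_mul_coef a b m :
  (geom_tr a * geom_tr b)`_m = \sum_(j < N) \sum_(i < N) (m == a * i + b * j)%N%:R.
Proof.
rewrite /geom_tr big_distrl coef_sum /= exchange_big; apply: eq_bigr => j _.
by rewrite big_distrr coef_sum; apply: eq_bigr => i _; rewrite /= -exprD coefXn.
Qed.

Lemma div6_le_coef_geom_tr23 m : (m < N)%N ->
  ((m %/ 6)%N)%:Z <= (geom_tr 2 * geom_tr 3)`_m.
Proof.
move=> lt_mN; rewrite geom_tr_mul_coef.
pose solvable j := ((3 * j <= m) && ~~ odd (m - 3 * j))%N.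
have solvable_le (j : 'I_N) :
    (solvable j)%:R <= \sum_(i < N) (m == 2 * i + 3 * j)%N%:R :> int.
  rewrite /solvable; case: andP => [[le_3j_m even_m3j] | _]; last first.
    by rewrite sumr_ge0 // => i _; rewrite ler0n.
  have m3jE : ((m - 3 * j)./2 * 2 = m - 3 * j)%N.
    by rewrite muln2 -[RHS]odd_double_half (negbTE even_m3j).
  have lt_iN : ((m - 3 * j)./2 < N)%N by lia.
  rewrite (bigD1 (Ordinal lt_iN)) //= (_ : (m == _)%N = true); last by apply/eqP; lia.
  by rewrite lerDl sumr_ge0 // => i _; rewrite ler0n.
set t := (m %/ 6)%N.
have le_6t_m : (6 * t <= m)%N by rewrite mulnC leq_divM.
(* Of j = 2k and j = 2k + 1, exactly one makes m - 3j even. *)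
have solvable_pair (k : 'I_t) : (solvable k.*2)%:R + (solvable k.*2.+1)%:R = 1 :> int.
  have lt_kt := ltn_ord k.
  have le_3j_m : (3 * k.*2.+1 <= m)%N by rewrite -muln2; lia.
  rewrite /solvable.
  have -> : (m - 3 * k.*2 = (m - 3 * k.*2.+1) + 3)%N by rewrite -muln2; lia.
  rewrite le_3j_m (leq_trans _ le_3j_m) ?leq_mul2l ?leqnSn // oddD /= addbT.
  by case: (odd _).
apply: le_trans (ler_sum _ (fun j _ => solvable_le j)).
rewrite (@big_ord_cat _ _ _ t.*2 N (fun j => (solvable j)%:R)) /=;
  last by rewrite -muln2; lia.
rewrite -[X in X <= _]addr0 lerD //; last by rewrite sumr_ge0 // => j _; rewrite ler0n.
rewrite -(@big_ord_double _ _ _ t (fun j => (solvable j)%:R)) -big_split /=.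
rewrite (eq_bigr _ (fun k _ => solvable_pair k)).
by rewrite sumr_const card_ord natz.
Qed.

Lemma nncoefD F G : nncoef F -> nncoef G -> nncoef (F + G).
Proof. by move=> F_nn G_nn i lt_iN; rewrite coefD addr_ge0 ?F_nn ?G_nn. Qed.

Lemma nncoefM F G : nncoef F -> nncoef G -> nncoef (F * G).
Proof.
move=> F_nn G_nn i lt_iN; rewrite coefM sumr_ge0 // => j _.
by rewrite mulr_ge0 ?F_nn ?G_nn //; apply: leq_ltn_trans lt_iN;
  rewrite ?leq_subr // -ltnS.
Qed.

Lemma nncoef1M F G : nncoef1 F -> nncoef1 G -> nncoef1 (F * G).
Proof.
by case=> F0 F_nn [G0 G_nn]; split; [rewrite coef0M F0 G0 mulr1 | apply: nncoefM].
Qed.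

Lemma nncoef1_1 : nncoef1 1.
Proof. by split=> [|i _]; rewrite coef1 //; case: (i == 0%N). Qed.

Lemma nncoef1X F k : nncoef1 F -> nncoef1 (F ^+ k).
Proof.
by move=> F1; elim: k => [|k IH]; [apply: nncoef1_1 | rewrite exprS; apply: nncoef1M].
Qed.

Lemma nncoef1_prod (I : Type) (r : seq I) (P : pred I) (F : I -> {poly int}) :
  (forall i, P i -> nncoef1 (F i)) -> nncoef1 (\prod_(i <- r | P i) F i).
Proof.
by move=> F1; apply: (big_ind nncoef1) => //; [apply: nncoef1_1 | apply: nncoef1M].
Qed.

Lemma vanish_belowD F H : vanish_below F -> vanish_below H -> vanish_below (F + H).
Proof. by move=> F0 H0 i lt_iN; rewrite coefD F0 ?H0 ?addr0. Qed.

Lemma vanish_below_XnM k F : (N <= k)%N -> vanish_below ('X^k * F).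
Proof. by move=> leNk i lt_iN; rewrite coefXnM (leq_trans lt_iN leNk). Qed.

Lemma coef_le_mul_nncoef1 Y G m :
  (m < N)%N -> nncoef Y -> nncoef1 G -> Y`_m <= (Y * G)`_m.
Proof.
move=> lt_mN Y_nn [G0 G_nn]; rewrite coefM big_ord_recr /= subnn G0 mulr1 lerDr.
rewrite sumr_ge0 // => j _; rewrite mulr_ge0 ?Y_nn ?G_nn //.
  exact: ltn_trans lt_mN.
by apply: leq_ltn_trans lt_mN; rewrite leq_subr.
Qed.

Lemma nncoef1_prod_prefix (F : nat -> {poly int}) K M :
  (forall j, nncoef1 (F j)) -> (K <= M)%N ->
  exists2 R, nncoef1 R & \prod_(j < M) F j = \prod_(j < K) F j * R.
Proof.
move=> F1 leKM; exists (\prod_(K <= j < M) F j); last exact: big_ord_cat.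
by apply: nncoef1_prod.
Qed.

Lemma nncoef1_prod_shift_prefix (F : nat -> {poly int}) K M :
  (forall j, nncoef1 (F j)) -> (K < M)%N ->
  exists2 R, nncoef1 R & \prod_(j < M) F j = F 0%N * \prod_(j < K) F j.+1 * R.
Proof.
case: M => // M F1 leKM; rewrite big_ord_recl /=.
have [R R1 ->] := nncoef1_prod_prefix (fun j => F j.+1) K M (fun j => F1 j.+1) leKM.
by exists R; rewrite // mulrA.
Qed.

Lemma mul_geom_tr e : (1 - 'X^e) * geom_tr e = 1 - 'X^(e * N).
Proof.
rewrite exprM -(mul1B_sumX _ 'X^e); congr (_ * _).
by apply: eq_bigr => j _; rewrite exprM.
Qed.

Lemma geom_tr_nncoef e : nncoef (geom_tr e).
Proof. by move=> i _; rewrite coef_sum sumr_ge0 // => j _; rewrite coefXn ler0n. Qed.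

Lemma XnM_geom_tr_nncoef e : nncoef ('X^e * geom_tr e).
Proof.
move=> i lt_iN; rewrite coefXnM; case: ifP => // _.
by apply: geom_tr_nncoef; apply: leq_ltn_trans lt_iN; apply: leq_subr.
Qed.

Lemma poch_inv_tr_interleave r d :
  poch_inv_tr N r d.*2 * poch_inv_tr N (r + d) d.*2
  = \prod_(j < N.*2) geom_tr (r + d * j).
Proof.
rewrite -(@big_ord_double _ _ _ N (fun j => geom_tr (r + d * j))).
by congr (_ * _); apply: eq_bigr => i _; apply: eq_bigr => j _;
  rewrite -!muln2; congr 'X^(_ * _); lia.
Qed.

Hypothesis N_gt0 : (0 < N)%N.

Lemma nncoef1B F H : nncoef1 F -> vanish_below H -> nncoef1 (F - H).
Proof.
case=> F0 F_nn H0; split=> [|i lt_iN]; first by rewrite coefB H0 // subr0.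
by rewrite coefB H0 // subr0 F_nn.
Qed.

Lemma nncoef1_1BXn k : (N <= k)%N -> nncoef1 (1 - 'X^k).
Proof.
by move=> leNk; rewrite -[X in _ - X]mulr1; apply: nncoef1B (nncoef1_1) _;
  apply: vanish_below_XnM.
Qed.

Lemma geom_tr_nncoef1 e : (0 < e)%N -> nncoef1 (geom_tr e).
Proof.
move=> e_gt0; split; last exact: geom_tr_nncoef.
rewrite coef_sum; case: N N_gt0 => // K _.
rewrite big_ord_recl /= coefXn muln0 eqxx big1 ?addr0 // => j _.
by rewrite coefXn eq_sym muln_eq0 eqn0Ngt e_gt0.
Qed.

(* (1 - q^(a+b)) / ((1 - q^a)(1 - q^b)) = 1/(1 - q^b) + q^a/(1 - q^a). *)
Lemma nncoef1_ratio a b : (0 < a)%N -> (0 < b)%N ->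
  nncoef1 ((1 - 'X^(a + b)) * (geom_tr a * geom_tr b)).
Proof.
move=> a_gt0 b_gt0.
have -> : (1 - 'X^(a + b)) * (geom_tr a * geom_tr b) =
    (geom_tr b + 'X^a * geom_tr a)
    - ('X^(a * N) * geom_tr b + 'X^(a + b * N) * geom_tr a).
  have Ga := mul_geom_tr a; have Gb := mul_geom_tr b.
  rewrite !exprD.
  have -> : (1 - 'X^a * 'X^b) * (geom_tr a * geom_tr b) =
     (1 - 'X^a) * geom_tr a * geom_tr b + 'X^a * ((1 - 'X^b) * geom_tr b * geom_tr a).
    by ring.
  by rewrite Ga Gb; ring.
apply: nncoef1B; last first.
  apply: vanish_belowD; apply: vanish_below_XnM; first exact: leq_pmull.
  exact: leq_trans (leq_pmull _ b_gt0) (leq_addl _ _).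
split; last by apply: nncoefD; [apply: geom_tr_nncoef | apply: XnM_geom_tr_nncoef].
by rewrite coefD coefXnM a_gt0 addr0; case: (geom_tr_nncoef1 _ b_gt0).
Qed.

Lemma nncoef1_prod_ratio (f g : nat -> nat) K :
  (forall j, 0 < f j)%N -> (forall j, 0 < g j)%N ->
  nncoef1 (\prod_(j < K) (1 - 'X^(f j + g j))
           * \prod_(j < K) geom_tr (f j) * \prod_(j < K) geom_tr (g j)).
Proof.
move=> f_gt0 g_gt0; rewrite -!big_split /=.
by apply: nncoef1_prod => j _; rewrite -mulrA; apply: nncoef1_ratio.
Qed.

Lemma poch_tr_mul_inv_nncoef1 a b : (0 < a)%N ->
  nncoef1 (poch_tr N a b * poch_inv_tr N a b).
Proof.
move=> a_gt0; rewrite -big_split /=; apply: nncoef1_prod => i _.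
by rewrite mul_geom_tr; apply: nncoef1_1BXn; rewrite leq_pmull // ltn_addr.
Qed.

End TruncatedSeries.

Lemma poch_inv_tr_split N r : (0 < N)%N -> (0 < r)%N ->
  let U := poch_inv_tr N r 10 * poch_inv_tr N (r + 5) 10 in
  exists R1 R2, [/\ nncoef1 N R1, nncoef1 N R2,
    U = \prod_(j < N) geom_tr N (r + 5 * j) * R1 &
    U = geom_tr N r * \prod_(j < N) geom_tr N (r + 5 * j.+1) * R2].
Proof.
move=> N_gt0 r_gt0 U.
have geom_nncoef1 j : nncoef1 N (geom_tr N (r + 5 * j)).
  by apply: geom_tr_nncoef1; rewrite // addn_gt0 r_gt0.
have -> : U = \prod_(j < N + N) geom_tr N (r + 5 * j).
  by rewrite addnn; exact: poch_inv_tr_interleave N r 5.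
have [R1 R1_nn E1] := nncoef1_prod_prefix _ _ _ _ geom_nncoef1 (leq_addr N N).
have lt_N_2N : (N < N + N)%N by rewrite -{1}[N]add0n ltn_add2r.
have [R2 R2_nn E2] := nncoef1_prod_shift_prefix _ _ _ _ geom_nncoef1 lt_N_2N.
by rewrite muln0 addn0 in E2; exists R1, R2.
Qed.

Lemma J10_ratio_nncoef1 N r s :
  (0 < N)%N -> (0 < r)%N -> (0 < s)%N -> (r + s = 5)%N ->
  nncoef1 N (J_tr N 10 * \prod_(j < N) geom_tr N (r + 5 * j)
                       * \prod_(j < N) geom_tr N (s + 5 * j.+1)).
Proof.
move=> N_gt0 r_gt0 s_gt0 rs5.
rewrite (_ : J_tr N 10 = \prod_(j < N) (1 - 'X^((r + 5 * j) + (s + 5 * j.+1)))).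
  apply: (@nncoef1_prod_ratio N N_gt0 (fun j => r + 5 * j)%N (fun j => s + 5 * j.+1)%N);
  by move=> j; rewrite addn_gt0 ?r_gt0 ?s_gt0.
by apply: eq_bigr => j _; congr (1 - 'X^_); lia.
Qed.

Lemma bprime_poly_factor N : (0 < N)%N ->
  exists2 G, nncoef1 N G &
    2%:P * 'X * J_tr N 10 ^+ 6 * Jab_inv_tr N 2 10 ^+ 2 * Jab_inv_tr N 3 10 ^+ 2
    = 2%:P * ('X * (geom_tr N 2 * geom_tr N 3 * G)).
Proof.
move=> N_gt0; rewrite /Jab_inv_tr (_ : 10 - 2 = 3 + 5)%N // (_ : 10 - 3 = 2 + 5)%N //.
have [R1 [R2 [R1_nn R2_nn U2A U2B]]] := poch_inv_tr_split N 2 N_gt0 isT.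
have [R3 [R4 [R3_nn R4_nn U3A U3B]]] := poch_inv_tr_split N 3 N_gt0 isT.
set J := J_tr N 10.
set A2 := \prod_(j < N) geom_tr N (2 + 5 * j) in U2A *.
set A3 := \prod_(j < N) geom_tr N (3 + 5 * j) in U3A *.
set B2 := \prod_(j < N) geom_tr N (2 + 5 * j.+1) in U2B *.
set B3 := \prod_(j < N) geom_tr N (3 + 5 * j.+1) in U3B *.
exists ((J * poch_inv_tr N 10 10) ^+ 4 * (J * A2 * B3) * (J * A3 * B2)
        * R1 * R2 * R3 * R4).
  have JA2B3 : nncoef1 N (J * A2 * B3) by apply: J10_ratio_nncoef1.
  have JA3B2 : nncoef1 N (J * A3 * B2) by apply: J10_ratio_nncoef1.
  have Jp10 : nncoef1 N (J * poch_inv_tr N 10 10) by apply: poch_tr_mul_inv_nncoef1.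
  by do 6!apply: nncoef1M => //; apply: nncoef1X.
transitivity (2%:P * 'X * (J * poch_inv_tr N 10 10) ^+ 4 * J ^+ 2
  * (poch_inv_tr N 2 10 * poch_inv_tr N (2 + 5) 10)
  * (poch_inv_tr N 2 10 * poch_inv_tr N (2 + 5) 10)
  * (poch_inv_tr N 3 10 * poch_inv_tr N (3 + 5) 10)
  * (poch_inv_tr N 3 10 * poch_inv_tr N (3 + 5) 10)); first by ring.
by rewrite {1}U2A U2B {1}U3A U3B; ring.
Qed.

Theorem mainTheorem5 (n : nat) (hn : (1 <= n)%N) :
  ((2 * ((n - 1) %/ 6))%N)%:Z <= bprime n.
Proof.
case: n hn => // m _; rewrite /bprime.
have [G G_nn ->] := @bprime_poly_factor m.+2 isT.
rewrite coefCM coefXM /= subn1 /= PoszM ler_wpM2l //.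
have lt_m_N : (m < m.+2)%N by [].
apply: le_trans (div6_le_coef_geom_tr23 _ _ lt_m_N) _.
apply: (coef_le_mul_nncoef1 _ _ _ _ lt_m_N _ G_nn).
by apply: nncoefM; apply: geom_tr_nncoef.
Qed.
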